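(* For every graph $G$, we have $\lfloor \mathrm{sp}\rfloor(G)\geq|V(G)|-\mathrm{diam}(G)-1$. Moreover, if $\mathrm{usp}(G)\leq\mathrm{diam}(G)$, then $\lfloor \mathrm{sp}\rfloor(G)\geq|V(G)|-\mathrm{diam}(G)$.
   Context: All graphs are finite, have at least one vertex, have no loops, and may have multiple (parallel) edges. $\mathrm{diam}(G)$ is the diameter of $G$ (maximum distance, in number of edges, between two vertices). A unique shortest path is a shortest $u$–$v$ path $P$ such that every $u$–$v$ path with the same number of vertices is identical to $P$, where two paths with different edge sequences are different even if their vertex sequences agree; a single vertex is a unique shortest path. The parade number $\mathrm{usp}(G)$ is the largest number of vertices of a unique shortest path in $G$. The spectator number is $\mathrm{sp}(G)=|V(G)|-\mathrm{usp}(G)$. A minor of $H$ is any graph obtained from $H$ by a sequence of: deleting an isolated vertex, deleting an edge, contracting an edge that has no edge parallel to it. The spectator floor $\lfloor \mathrm{sp}\rfloor(G)$ is the minimum of $\mathrm{sp}(H)$ over all graphs $H$ of which $G$ is a minor. *)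

From Stdlib Require Import ClassicalEpsilon.
From mathcomp Require Import all_boot.
Set Implicit Arguments. Unset Strict Implicit. Unset Printing Implicit Defensive.

(* Vertices are 'I_nv, edges are 'I_ne; edge e has (unordered) endpoints
   ends e, stored as an ordered pair.  Parallel edges are allowed. *)
Record graph := Graph {
  nv : nat;
  ne : nat;
  ends : 'I_ne -> 'I_nv * 'I_nv;
  nv_gt0 : 0 < nv;
  noloop : forall e, (ends e).1 != (ends e).2 }.

Arguments ends : clear implicits.
Arguments nv_gt0 : clear implicits.
Arguments noloop : clear implicits.

Definition vertex (G : graph) := 'I_(nv G).
Definition edge (G : graph) := 'I_(ne G).

Definition same_ends n (p q : 'I_n * 'I_n) : bool :=
  ((p.1 == q.1) && (p.2 == q.2)) || ((p.1 == q.2) && (p.2 == q.1)).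

Definition map_pair n m (f : 'I_n -> 'I_m) (p : 'I_n * 'I_n) := (f p.1, f p.2).

Definition joins (G : graph) (e : edge G) (x y : vertex G) : bool :=
  same_ends (ends G e) (x, y).

Fixpoint is_walk (G : graph) (x : vertex G) (s : seq (edge G * vertex G)) : Prop :=
  match s with
  | [::] => True
  | (e, y) :: s' => joins e x y /\ is_walk y s'
  end.

(* Its number of vertices is (size s).+1; two paths with the same start are
   identical iff their step lists (hence edge sequences) coincide. *)
Definition is_path (G : graph) (u v : vertex G) (s : seq (edge G * vertex G)) : Prop :=
  is_walk u s /\ uniq (u :: map snd s) /\ last u (map snd s) = v.

Definition is_shortest_path (G : graph) (u v : vertex G) s : Prop :=
  is_path u v s /\ forall s', is_path u v s' -> size s <= size s'.

Definition is_unique_shortest_path (G : graph) (u v : vertex G) s : Prop :=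
  is_shortest_path u v s /\
  forall s', is_path u v s' -> size s' = size s -> s' = s.

Definition pb (P : Prop) : bool :=
  if excluded_middle_informative P then true else false.

Lemma pbP (P : Prop) : reflect P (pb P).
Proof. by rewrite /pb; case: excluded_middle_informative => h; constructor. Qed.

Definition has_usp (G : graph) (k : nat) : Prop :=
  exists (u v : vertex G) s, is_unique_shortest_path u v s /\ (size s).+1 = k.

(* parade number: largest number of vertices of a unique shortest path
   (a path has at most nv G vertices) *)
Definition usp (G : graph) : nat :=
  \max_(k < (nv G).+1 | pb (has_usp G k)) k.

Definition sp (G : graph) : nat := nv G - usp G.

Definition is_diam (G : graph) (d : nat) : Prop :=
  (forall u v : vertex G, exists s, is_path u v s /\ size s <= d) /\
  (exists u v : vertex G, (exists s, is_path u v s /\ size s = d) /\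
                          forall s, is_path u v s -> d <= size s).

Definition delete_isolated_vertex (H K : graph) : Prop :=
  exists (v : vertex H) (fv : vertex K -> vertex H) (fe : edge K -> edge H),
    (forall e, (ends H e).1 != v /\ (ends H e).2 != v) /\
    injective fv /\ (forall x, (exists y, fv y = x) <-> x <> v) /\
    bijective fe /\
    (forall e, same_ends (map_pair fv (ends K e)) (ends H (fe e))).

Definition delete_edge (H K : graph) : Prop :=
  exists (e0 : edge H) (fv : vertex K -> vertex H) (fe : edge K -> edge H),
    bijective fv /\
    injective fe /\ (forall e, (exists e', fe e' = e) <-> e <> e0) /\
    (forall e, same_ends (map_pair fv (ends K e)) (ends H (fe e))).

Definition contract_edge (H K : graph) : Prop :=
  exists (e0 : edge H) (fv : vertex H -> vertex K) (fe : edge K -> edge H),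
    (forall e, e <> e0 -> ~~ same_ends (ends H e) (ends H e0)) /\
    (forall y, exists x, fv x = y) /\
    fv (ends H e0).1 = fv (ends H e0).2 /\
    (forall x y, fv x = fv y -> x = y \/ same_ends (x, y) (ends H e0)) /\
    injective fe /\ (forall e, (exists e', fe e' = e) <-> e <> e0) /\
    (forall e, same_ends (ends K e) (map_pair fv (ends H (fe e)))).

Definition isomorphic (H K : graph) : Prop :=
  exists (fv : vertex H -> vertex K) (fe : edge H -> edge K),
    bijective fv /\ bijective fe /\
    (forall e, same_ends (map_pair fv (ends H e)) (ends K (fe e))).

Definition minor_step (H K : graph) : Prop :=
  [\/ isomorphic H K, delete_isolated_vertex H K, delete_edge H K
    | contract_edge H K].

(* minor_of G H : G is a minor of H *)
Inductive minor_of (G : graph) : graph -> Prop :=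
  | minor_refl : minor_of G G
  | minor_trans H K : minor_step H K -> minor_of G K -> minor_of G H.

Definition floor_pred (G : graph) : pred nat :=
  fun k => pb (exists H, minor_of G H /\ sp H = k).

Lemma floor_pred_ex (G : graph) : exists k, floor_pred G k.
Proof.
exists (sp G); apply/pbP; exists G; split=> //; exact: minor_refl.
Qed.

Definition floor_sp (G : graph) : nat := ex_minn (floor_pred_ex G).

(* Say that a nonempty union X of components of H certifies c when any two vertices
   of X are joined either by a walk with fewer than |X| - c edges or by two distinct
   walks with at most |X| - c edges.  A unique shortest path inside X then has at
   most |X| - c vertices, and one outside X lives in the complement, which has at most
   nv H - |X| <= nv H - c vertices; so a certificate for c gives sp H >= c.
   For G of diameter d the whole vertex set certifies nv G - d - 1, and even nv G - d
   when usp G <= d, since then every pair at distance d has two shortest paths.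
   Certificates survive undoing a minor operation.  Relabelling and re-adding an
   isolated vertex change nothing.  Re-adding an edge either keeps X closed or joins
   it to the component on the other side, which brings as many new vertices as the
   new walks need edges.  Uncontracting an edge lifts walks injectively, adding at
   most one edge exactly when the merged vertex lies in X, and then the preimage of
   X has one vertex more than X. *)

From Stdlib Require Import Classical.
From mathcomp Require Import all_boot zify.
Set Implicit Arguments. Unset Strict Implicit. Unset Printing Implicit Defensive.

Lemma same_endsP n (p q : 'I_n * 'I_n) :
  reflect (p = q \/ p = (q.2, q.1)) (same_ends p q).
Proof.
case: p q => [a b] [c d]; rewrite /same_ends /=; apply: (iffP orP).
  by case=> /andP[/eqP-> /eqP->]; auto.
by case=> [[-> ->]|[-> ->]]; rewrite !eqxx; auto.
Qed.

Lemma same_ends_refl n (p : 'I_n * 'I_n) : same_ends p p.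
Proof. by apply/same_endsP; left. Qed.

Lemma same_ends_sym n (p q : 'I_n * 'I_n) : same_ends p q -> same_ends q p.
Proof.
by case: p q => [a b] [c d] /same_endsP /= [[-> ->]|[-> ->]]; apply/same_endsP; auto.
Qed.

Lemma same_ends_trans n (p q r : 'I_n * 'I_n) :
  same_ends p q -> same_ends q r -> same_ends p r.
Proof.
case: p q r => [a b] [c d] [e f] /same_endsP /= [[-> ->]|[-> ->]]
  /same_endsP /= [[-> ->]|[-> ->]]; by apply/same_endsP; auto.
Qed.

Lemma same_ends_map n m (f : 'I_n -> 'I_m) p q :
  same_ends p q -> same_ends (map_pair f p) (map_pair f q).
Proof.
by case: p q => [a b] [c d] /same_endsP /= [[-> ->]|[-> ->]]; apply/same_endsP; auto.
Qed.

Lemma catsI (T : Type) (s : seq T) : injective (cat s).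
Proof. by elim: s => //= x s IH t1 t2 [/IH]. Qed.

Lemma catIs (T : eqType) (t : seq T) : injective (cat^~ t).
Proof.
move=> s1 s2 E; have /addIn sz : size s1 + size t = size s2 + size t.
  by rewrite -!size_cat E.
by move/eqP: E; rewrite eqseq_cat // => /andP[/eqP].
Qed.

Section Walks.
Variable G : graph.
Implicit Types (u v w x y : vertex G) (e : edge G) (s t : seq (edge G * vertex G)).

Lemma joins_sym e x y : joins e x y -> joins e y x.
Proof. by move/same_ends_trans; apply; apply/same_endsP; right. Qed.

Lemma joins_neq e x y : joins e x y -> x != y.
Proof.
by rewrite /joins => /same_endsP /= [] E; have := noloop G e; rewrite E // eq_sym.
Qed.

Lemma joins_other e a b x y : joins e a b -> joins e x y -> (y == a) || (y == b).
Proof.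
move=> /same_ends_sym jab /same_ends_sym jxy.
case/same_endsP: (same_ends_trans jxy (same_ends_sym jab)) => -[_ ->].
  by rewrite eqxx orbT.
by rewrite eqxx.
Qed.

Definition walk u s v := is_walk u s /\ last u (map snd s) = v.

Lemma walk_cons u e b s v : walk u ((e, b) :: s) v <-> joins e u b /\ walk b s v.
Proof. by split=> [[[j w] l]|[j [w l]]]. Qed.

Lemma walk1 u e v : joins e u v -> walk u [:: (e, v)] v.
Proof. by move=> j; apply/walk_cons. Qed.

Lemma walk_cat u s w t v : walk u s w -> walk w t v -> walk u (s ++ t) v.
Proof.
elim: s u => [|[e b] s IH] u /=; first by move=> [_ <-].
by move=> /walk_cons[j ws] wt; apply/walk_cons; split; last exact: IH.
Qed.

Lemma walk_drop u s v k : walk u s v ->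
  walk (last u (map snd (take k s))) (drop k s) v.
Proof.
rewrite -{1}(cat_take_drop k s); elim: (take k s) u => [|[e b] s1 IH] u //=.
by case/walk_cons=> _ /IH.
Qed.

Lemma walk_rev u s v : walk u s v -> exists2 t, walk v t u & size t = size s.
Proof.
elim: s u => [|[e b] s IH] u /=; first by move=> [_ <-]; exists [::].
case/walk_cons=> j /IH[t wt <-]; exists (t ++ [:: (e, u)]).
  by apply: walk_cat wt (walk1 (joins_sym j)).
by rewrite size_cat addn1.
Qed.

Lemma is_pathE u v s : is_path u v s <-> walk u s v /\ uniq (u :: map snd s).
Proof. by split=> [[w [un l]]|[[w l] un]]. Qed.

Lemma walk_cut_loop u s v : walk u s v -> ~~ uniq (u :: map snd s) ->
  exists2 t, walk u t v & size t < size s.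
Proof.
elim: s u => [|[e b] s IH] u //= /[dup] w /walk_cons[j wb].
rewrite negb_and negbK => /orP[uin|nu]; last first.
  by have [t wt lt] := IH _ wb nu; exists ((e, b) :: t) => //; apply/walk_cons.
set L := (e, b) :: s; set i := index u (map snd L).
have ilt : i < size L by rewrite -(size_map snd) index_mem.
exists (drop i.+1 L); last by rewrite size_drop /= subSS ltnS leq_subr.
have := walk_drop i.+1 w; rewrite map_take (take_nth u) ?size_map //.
by rewrite last_rcons nth_index.
Qed.

Lemma walk_shorten u s v : walk u s v -> exists2 p, is_path u v p & size p <= size s.
Proof.
have [n] := ubnP (size s); elim: n s => // n IH s /ltnSE ltsn w.
have [un|nun] := boolP (uniq (u :: map snd s)); first by exists s => //; apply/is_pathE.
have [t wt lt] := walk_cut_loop w nun.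
have [|p pp lp] := IH t _ wt; first exact: leq_trans lt ltsn.
by exists p => //; apply: leq_trans lp (ltnW lt).
Qed.

Definition closed_set (X : {set vertex G}) :=
  forall e x y, joins e x y -> x \in X -> y \in X.

Lemma closed_setT : closed_set [set: vertex G].
Proof. by move=> e x y _; rewrite !inE. Qed.

Lemma closed_setC X : closed_set X -> closed_set (~: X).
Proof.
by move=> cX e x y /joins_sym j; rewrite !inE; apply: contra; apply: cX j.
Qed.

Lemma closed_setU X Y : closed_set X -> closed_set Y -> closed_set (X :|: Y).
Proof.
move=> cX cY e x y j; rewrite !inE.
by case/orP=> [/(cX _ _ _ j)|/(cY _ _ _ j)] ->; rewrite ?orbT.
Qed.

Lemma walk_sub X u s v : closed_set X -> u \in X -> walk u s v ->
  {subset u :: map snd s <= X}.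
Proof.
move=> cX; elim: s u => [|[e b] s IH] u uX; first by move=> _ z; rewrite inE => /eqP->.
case/walk_cons=> j /(IH _ (cX _ _ _ j uX)) sub z.
by rewrite inE => /orP[/eqP->|/sub].
Qed.

Lemma walk_mem X u s v : closed_set X -> u \in X -> walk u s v -> v \in X.
Proof. by move=> cX uX w; apply: (walk_sub cX uX w); case: w => _ <-; apply: mem_last. Qed.

Lemma card_vertex_set (X : {set vertex G}) : #|X| <= nv G.
Proof. by have := max_card X; rewrite card_ord. Qed.

Lemma path_card X u v s : closed_set X -> u \in X -> is_path u v s ->
  (size s).+1 <= #|X|.
Proof.
move=> cX uX /is_pathE[w un]; rewrite cardE -(size_map snd).
by apply: uniq_leq_size un _ => z /(walk_sub cX uX w); rewrite mem_enum.
Qed.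

Lemma path_size u v s : is_path u v s -> (size s).+1 <= nv G.
Proof.
by move/(path_card closed_setT (in_setT u)); rewrite cardsT card_ord.
Qed.

Definition component y : {set vertex G} := [set z | pb (exists s, walk y s z)].

Lemma component_refl y : y \in component y.
Proof. by rewrite inE; apply/pbP; exists [::]. Qed.

Lemma closed_component y : closed_set (component y).
Proof.
move=> e a b j; rewrite !inE => /pbP[s w]; apply/pbP.
by exists (s ++ [:: (e, b)]); apply: walk_cat w (walk1 j).
Qed.

Lemma component_walk y a b : a \in component y -> b \in component y ->
  exists2 p, walk a p b & size p < #|component y|.
Proof.
move=> aC bC; move: (aC) (bC); rewrite !inE => /pbP[s1 /walk_rev[t1 w1 _]] /pbP[s2 w2].
have [p pp _] := walk_shorten (walk_cat w1 w2).
exists p; first by case/is_pathE: pp.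
exact: path_card (@closed_component y) aC pp.
Qed.

End Walks.

(* With a budget of [n - c] edges, [rich_pair n c u v] leaves no room for a unique
   shortest [u]-[v] path with more than [n - c] vertices: a shorter walk beats it,
   and two distinct walks within budget cannot both coincide with it. *)
Definition rich_pair (G : graph) (n c : nat) (u v : vertex G) :=
  (exists2 s, walk u s v & size s + c < n) \/
  (exists s1 s2, [/\ s1 <> s2, walk u s1 v, walk u s2 v,
                     size s1 + c <= n & size s2 + c <= n]).

Definition certifies (G : graph) (c : nat) (X : {set vertex G}) :=
  [/\ X != set0, closed_set X & {in X &, forall u v, rich_pair #|X| c u v}].

Definition sp_certificate (G : graph) (c : nat) := exists X : {set vertex G}, certifies c X.

Section RichPairs.
Variables (G : graph) (c : nat).
Implicit Types (u v w : vertex G) (s t : seq (edge G * vertex G)).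

Lemma rich_pair_mono n1 n2 u v : n1 <= n2 -> rich_pair n1 c u v -> rich_pair n2 c u v.
Proof.
move=> le [[s w l]|[s1 [s2 [ne w1 w2 l1 l2]]]]; first by left; exists s => //; lia.
by right; exists s1, s2; split => //; lia.
Qed.

Lemma rich_pair_le n u v : rich_pair n c u v -> c <= n.
Proof. by case=> [[s _ l]|[s1 [s2 [_ _ _ l _]]]]; lia. Qed.

Lemma rich_pair_catr n u w v t :
  rich_pair n c u w -> walk w t v -> rich_pair (n + size t) c u v.
Proof.
move=> [[s ws l]|[s1 [s2 [ne w1 w2 l1 l2]]]] wt.
  by left; exists (s ++ t); [apply: walk_cat wt | rewrite size_cat; lia].
right; exists (s1 ++ t), (s2 ++ t); split; rewrite ?size_cat; try lia.
- by move/catIs.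
- exact: walk_cat wt.
- exact: walk_cat wt.
Qed.

Lemma rich_pair_catl n u w v t :
  walk u t w -> rich_pair n c w v -> rich_pair (n + size t) c u v.
Proof.
move=> wt [[s ws l]|[s1 [s2 [ne w1 w2 l1 l2]]]].
  by left; exists (t ++ s); [apply: walk_cat ws | rewrite size_cat; lia].
right; exists (t ++ s1), (t ++ s2); split; rewrite ?size_cat; try lia.
- by move/catsI.
- exact: walk_cat w1.
- exact: walk_cat w2.
Qed.

Lemma walk_usp_eq u v s t : is_unique_shortest_path u v s ->
  walk u t v -> size t <= size s -> t = s.
Proof.
move=> [[ps short] uniq_s] wt le.
have [un|nun] := boolP (uniq (u :: map snd t)).
  have pt : is_path u v t by apply/is_pathE.
  by apply: (uniq_s _ pt); apply/eqP; rewrite eqn_leq le (short _ pt).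
have [t' wt' lt] := walk_cut_loop wt nun; have [p pp lp] := walk_shorten wt'.
by have := short _ pp; lia.
Qed.

Lemma rich_pair_usp n u v s : rich_pair n c u v ->
  is_unique_shortest_path u v s -> (size s).+1 + c <= n.
Proof.
move=> [[w ww l]|[w1 [w2 [ne w1w w2w l1 l2]]]] us.
  have [p pp lp] := walk_shorten ww; have := us.1.2 _ pp; lia.
rewrite leqNgt; apply/negP => lt; apply: ne.
have le1 : size w1 <= size s by lia.
have le2 : size w2 <= size s by lia.
by rewrite (walk_usp_eq us w1w le1) (walk_usp_eq us w2w le2).
Qed.

Lemma certifies_usp (X : {set vertex G}) k : certifies c X -> has_usp G k -> k + c <= nv G.
Proof.
case=> /set0Pn[x xX] cX rX [u [v [s [us <-]]]].
have cle := rich_pair_le (rX _ _ xX xX).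
have Xle := card_vertex_set X.
have [uX|uX] := boolP (u \in X).
  have vX : v \in X by case/is_pathE: us.1.1 => w _; apply: walk_mem cX uX w.
  by have := rich_pair_usp (rX _ _ uX vX) us; lia.
have := path_card (closed_setC cX) _ us.1.1; rewrite inE uX cardsCs setCK card_ord.
by move/(_ isT); lia.
Qed.

Lemma usp_leq m : (forall k, has_usp G k -> k <= m) -> usp G <= m.
Proof. by move=> h; apply/bigmax_leqP => k /pbP; apply: h. Qed.

Lemma usp_geq u v s : is_unique_shortest_path u v s -> (size s).+1 <= usp G.
Proof.
move=> us; have lt : (size s).+1 < (nv G).+1 by rewrite ltnS (path_size us.1.1).
apply: (leq_bigmax_cond (Ordinal lt)); apply/pbP; by exists u, v, s.
Qed.

Lemma certificate_usp : sp_certificate G c -> usp G + c <= nv G.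
Proof.
case=> X /[dup] cert [/set0Pn[x xX] _ rX].
have cle : c <= nv G.
  exact: leq_trans (rich_pair_le (rX _ _ xX xX)) (card_vertex_set X).
suff : usp G <= nv G - c by lia.
by apply: usp_leq => k /(certifies_usp cert); lia.
Qed.

Lemma certifies_setT : (forall u v, rich_pair (nv G) c u v) -> sp_certificate G c.
Proof.
move=> rG; exists [set: vertex G]; split; last by move=> u v _ _; rewrite cardsT card_ord.
  by apply/set0Pn; exists (Ordinal (nv_gt0 G)); rewrite inE.
exact: closed_setT.
Qed.

End RichPairs.

Lemma diam_certificate (G : graph) d : is_diam G d -> sp_certificate G (nv G - d - 1).
Proof.
case=> hd _; apply: certifies_setT => u v; have [s [ps ls]] := hd u v.
left; exists s; first by case/is_pathE: ps.
by have := path_size ps; lia.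
Qed.

Lemma diam_usp_certificate (G : graph) d :
  is_diam G d -> usp G <= d -> sp_certificate G (nv G - d).
Proof.
case=> hd _ hu; apply: certifies_setT => u v; have [s [ps ls]] := hd u v.
have sn := path_size ps.
have [[t [pt lt]]|noshort] := classic (exists t, is_path u v t /\ size t < d).
  left; exists t; first by case/is_pathE: pt.
  by have := path_size pt; lia.
have short : forall t, is_path u v t -> size s <= size t.
  move=> t pt; rewrite leqNgt; apply/negP => lt; apply: noshort; exists t; split => //; lia.
have [[t [pt [et nts]]]|nosecond] :=
  classic (exists t, is_path u v t /\ size t = size s /\ t <> s).
  right; exists t, s; case/is_pathE: pt => wt _; case/is_pathE: ps => ws _.
  by split => //; lia.
have us : is_unique_shortest_path u v s.
  split=> [//|t pt et]; apply: NNPP => nts; apply: nosecond; by exists t.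
have ge_d : d <= size s by rewrite leqNgt; apply/negP => lt; apply: noshort; exists s.
by have := usp_geq us; lia.
Qed.

Section Embedding.
Variables (H K : graph) (gv : vertex K -> vertex H) (ge : edge K -> edge H).
Hypotheses (gv_inj : injective gv) (ge_inj : injective ge).
Hypothesis ends_g : forall e, same_ends (map_pair gv (ends K e)) (ends H (ge e)).
Variable c : nat.
Implicit Types (X : {set vertex K}) (s : seq (edge K * vertex K)).

Definition map_walk s := [seq (ge p.1, gv p.2) | p <- s].

Lemma map_walk_inj : injective map_walk.
Proof. by apply: inj_map => -[e x] [e' x'] /= [/ge_inj-> /gv_inj->]. Qed.

Lemma joins_map e x y : joins e x y -> joins (ge e) (gv x) (gv y).
Proof.
by move=> /(same_ends_map gv) j; apply: same_ends_trans (same_ends_sym (ends_g e)) j.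
Qed.

Lemma joins_unmap e x y' : joins (ge e) (gv x) y' -> exists2 y, y' = gv y & joins e x y.
Proof.
move=> j; have := same_ends_trans (ends_g e) j; rewrite /joins.
case: (ends K e) => a b /same_endsP /= [[/gv_inj<- <-]|[<- /gv_inj<-]].
  by exists b => //; apply: same_ends_refl.
by exists a => //; apply/same_endsP; right.
Qed.

Lemma walk_map u s v : walk u s v -> walk (gv u) (map_walk s) (gv v).
Proof.
elim: s u => [|[e b] s IH] u; first by move=> [_ <-].
by case/walk_cons=> j w; apply/walk_cons; split; [apply: joins_map | apply: IH].
Qed.

Lemma rich_pair_map n u v : rich_pair n c u v -> rich_pair n c (gv u) (gv v).
Proof.
move=> [[s w l]|[s1 [s2 [ne w1 w2 l1 l2]]]].
  by left; exists (map_walk s); rewrite ?size_map //; apply: walk_map.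
right; exists (map_walk s1), (map_walk s2).
by split; rewrite ?size_map //; [move/map_walk_inj | apply: walk_map | apply: walk_map].
Qed.

Lemma image_closed_step X e x y :
  closed_set X -> joins (ge e) x y -> x \in gv @: X -> y \in gv @: X.
Proof.
move=> cX j /imsetP[x' x'X ex]; rewrite ex in j.
by have [y' -> j'] := joins_unmap j; apply: imset_f; apply: cX j' x'X.
Qed.

Lemma certifies_image X : certifies c X -> closed_set (gv @: X) -> certifies c (gv @: X).
Proof.
case=> X0 _ rX cY; split=> //; first by rewrite imset_eq0.
rewrite card_imset // => _ _ /imsetP[u uX ->] /imsetP[v vX ->].
exact: rich_pair_map (rX _ _ uX vX).
Qed.

Lemma embed_onto_certificate : (forall e, exists e', ge e' = e) ->
  sp_certificate K c -> sp_certificate H c.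
Proof.
move=> ge_onto [X cert]; exists (gv @: X); apply: certifies_image => // e x y.
by have [e' <-] := ge_onto e; apply: image_closed_step; case: cert.
Qed.

Section Merge.
Variables (X : {set vertex K}) (x0 y0 : vertex K) (e0 : edge H).
Hypotheses (certX : certifies c X) (x0X : x0 \in X) (y0X : y0 \notin X).
Hypothesis e0_joins : joins e0 (gv x0) (gv y0).
Hypothesis ge_onto_but : forall e, e != e0 -> exists e', ge e' = e.

Let C := component y0.
Let Y := gv @: (X :|: C).

Lemma card_merge : #|Y| = #|X| + #|C|.
Proof.
case: certX => _ cX _.
have disj : X :&: C = set0.
  apply/setP => z; rewrite /C !inE; apply/andP => -[zX /pbP[s w]].
  by have := walk_mem (closed_setC cX) _ w; rewrite !inE zX => /(_ y0X).
by rewrite card_imset // cardsU disj cards0 subn0.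
Qed.

Lemma closed_merge : closed_set Y.
Proof.
case: certX => _ cX _; have cXC := closed_setU cX (@closed_component _ y0).
move=> e x y j xY; have [ee0|/ge_onto_but[e' ee']] := eqVneq e e0; last first.
  by rewrite -ee' in j; apply: image_closed_step cXC j xY.
rewrite ee0 in j; case/orP: (joins_other e0_joins j) => /eqP->.
  by apply: imset_f; rewrite inE x0X.
by apply: imset_f; rewrite inE component_refl orbT.
Qed.

Lemma rich_merge : {in Y &, forall u v, rich_pair #|Y| c u v}.
Proof.
case: certX => _ _ rX; rewrite card_merge.
move=> _ _ /imsetP[u /setUP[uX|uC] ->] /imsetP[v /setUP[vX|vC] ->].
- exact: rich_pair_mono (leq_addr _ _) (rich_pair_map (rX _ _ uX vX)).
- have [p wp lp] := component_walk (component_refl y0) vC.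
  have wt : walk (gv x0) ((e0, gv y0) :: map_walk p) (gv v).
    by apply/walk_cons; split; last exact: walk_map.
  apply: rich_pair_mono (rich_pair_catr (rich_pair_map (rX _ _ uX x0X)) wt).
  by rewrite /= size_map leq_add2l.
- have [p wp lp] := component_walk uC (component_refl y0).
  have wt : walk (gv u) (map_walk p ++ [:: (e0, gv x0)]) (gv x0).
    exact: walk_cat (walk_map wp) (walk1 (joins_sym e0_joins)).
  apply: rich_pair_mono (rich_pair_catl wt (rich_pair_map (rX _ _ x0X vX))).
  by rewrite size_cat size_map addn1 leq_add2l.
- have [p wp lp] := component_walk uC vC; left; exists (map_walk p).
    exact: walk_map.
  by have := rich_pair_le (rX _ _ x0X x0X); rewrite size_map /C; lia.
Qed.

Lemma certifies_merge : certifies c Y.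
Proof.
split; last exact: rich_merge; last exact: closed_merge.
by rewrite imset_eq0; apply/set0Pn; exists x0; rewrite inE x0X.
Qed.

End Merge.

Lemma embed_but_one_certificate e0 : (forall e, e != e0 -> exists e', ge e' = e) ->
  (forall y, exists x, gv x = y) -> sp_certificate K c -> sp_certificate H c.
Proof.
move=> ge_onto_but gv_onto [X /[dup] certX [_ cX _]].
have [clY|nclY] := classic (closed_set (gv @: X)).
  by exists (gv @: X); apply: certifies_image.
have [e [x [y [j xY yY]]]] :
    exists e x y, [/\ joins e x y, x \in gv @: X & y \notin gv @: X].
  apply: NNPP => h; apply: nclY => e x y j xY; apply: contraT => yY; exfalso; apply: h.
  by exists e, x, y.
have ee0 : e = e0.
  apply: contraNeq yY => /ge_onto_but[e' ee']; rewrite -ee' in j.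
  exact: image_closed_step cX j xY.
move: xY j; rewrite ee0 => /imsetP[x0 x0X ->]; have [y0 ey0] := gv_onto y.
move: yY; rewrite -ey0 (mem_imset _ _ gv_inj) => y0X j.
by exists (gv @: (X :|: component y0)); apply: certifies_merge certX x0X y0X j ge_onto_but.
Qed.

End Embedding.

Section Contraction.
Variables (H K : graph) (e0 : edge H) (fv : vertex H -> vertex K) (fe : edge K -> edge H).
Hypothesis fv_onto : forall y, exists x, fv x = y.
Hypothesis fv_e0 : fv (ends H e0).1 = fv (ends H e0).2.
Hypothesis fv_eq : forall x y, fv x = fv y -> x = y \/ same_ends (x, y) (ends H e0).
Hypothesis fe_inj : injective fe.
Hypothesis fe_onto_but : forall e, (exists e', fe e' = e) <-> e <> e0.
Hypothesis ends_fe : forall e, same_ends (ends K e) (map_pair fv (ends H (fe e))).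
Variable c : nat.
Implicit Types (X : {set vertex K}) (s : seq (edge K * vertex K)).

Let m := fv (ends H e0).1.

Lemma fv_merged x y : fv x = fv y -> x != y -> fv x = m.
Proof.
move=> E /eqP ne; rewrite /m.
by case: (fv_eq E) => [//|/same_endsP[] /(congr1 fst) /= ->]; rewrite ?fv_e0.
Qed.

Lemma joins_e0 x y : fv x = fv y -> x != y -> joins e0 x y.
Proof. by move=> E /eqP ne; case: (fv_eq E) => // /same_ends_sym. Qed.

Lemma fv_joins_e0 x y : joins e0 x y -> fv x = fv y.
Proof. by rewrite /joins; case: (ends H e0) fv_e0 => a b /= E /same_endsP[] [<- <-]. Qed.

Lemma fe_neq e : fe e != e0.
Proof. by apply/eqP; apply/fe_onto_but; exists e. Qed.

Definition tgtv e (b : vertex K) : vertex H :=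
  if fv (ends H (fe e)).1 == b then (ends H (fe e)).1 else (ends H (fe e)).2.
Definition other e (b : vertex K) : vertex H :=
  if fv (ends H (fe e)).1 == b then (ends H (fe e)).2 else (ends H (fe e)).1.

Lemma joins_lift e a b : joins e a b ->
  [/\ fv (tgtv e b) = b, fv (other e b) = a & joins (fe e) (other e b) (tgtv e b)].
Proof.
move=> j; have ab := joins_neq j.
have := same_ends_trans (same_ends_sym (ends_fe e)) j.
rewrite /tgtv /other /joins; case: (ends H (fe e)) => p q /= /same_endsP /= [] [E1 E2].
  by rewrite E1 (negbTE ab) E2 same_ends_refl.
by rewrite E1 eqxx E2; split=> //; apply/same_endsP; right.
Qed.

(* Consecutive lifted vertices have the same image under [fv], so when they differ
   they are the two ends of [e0]. *)
Fixpoint lift (cur : vertex H) s (tgt : vertex H) : seq (edge H * vertex H) :=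
  match s with
  | [::] => if cur == tgt then [::] else [:: (e0, tgt)]
  | (e, b) :: s' =>
      (if cur == other e b then [::] else [:: (e0, other e b)]) ++
      (fe e, tgtv e b) :: lift (tgtv e b) s' tgt
  end.

Lemma walk_e0 x y : fv x = fv y ->
  walk x (if x == y then [::] else [:: (e0, y)]) y.
Proof. by case: eqP => [->|/eqP ne] E //; apply/walk1/joins_e0. Qed.

Lemma size_e0 x y : fv x = fv y ->
  size (if x == y then [::] else [:: (e0, y)]) <= (fv x == m).
Proof. by case: eqP => [//|/eqP ne] E; rewrite (fv_merged E ne) eqxx. Qed.

Lemma lift_walk cur a s tgt v : walk a s v -> fv cur = a -> fv tgt = v ->
  walk cur (lift cur s tgt) tgt.
Proof.
elim: s cur a => [|[e b] s IH] cur a /=.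
  by move=> [_ <-] ca ta; apply: walk_e0; rewrite ca ta.
case/walk_cons=> j w ca tv; have [tb oa jj] := joins_lift j.
apply: walk_cat (walk_e0 _) _; first by rewrite ca oa.
by apply/walk_cons; split; last exact: IH w tb tv.
Qed.

Lemma lift_size cur a s tgt v : walk a s v -> fv cur = a -> fv tgt = v ->
  size (lift cur s tgt) <= size s + count_mem m (a :: map snd s).
Proof.
elim: s cur a => [|[e b] s IH] cur a /=.
  by move=> [_ <-] ca ta; rewrite -ca addn0 size_e0 // ca ta.
case/walk_cons=> j w ca tv; have [tb oa jj] := joins_lift j.
have := IH _ _ w tb tv; have := size_e0 (_ : fv cur = fv (other e b)).
rewrite size_cat /= ca oa => /(_ erefl); lia.
Qed.

Lemma lift_inj cur a s1 s2 tgt v1 v2 : walk a s1 v1 -> walk a s2 v2 ->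
  lift cur s1 tgt = lift cur s2 tgt -> s1 = s2.
Proof.
have drop_e0 t cur' : [seq p <- lift cur' t tgt | p.1 != e0] =
    [seq (fe p.1, tgtv p.1 p.2) | p <- t].
  elim: t cur' => [|[e b] t IH] cur' /=; first by case: eqP; rewrite //= eqxx.
  by rewrite filter_cat /= fe_neq IH; case: eqP; rewrite //= eqxx.
have unlift t a' v' : walk a' t v' -> [seq fv (tgtv p.1 p.2) | p <- t] = map snd t.
  elim: t a' => [|[e b] t IH] a' //= /walk_cons[j w].
  by have [-> _ _] := joins_lift j; rewrite (IH _ w).
move=> w1 w2 /(congr1 (filter (fun p => p.1 != e0))); rewrite !drop_e0 => E.
have E1 : map fst s1 = map fst s2.
  by apply: (inj_map fe_inj); move: (congr1 (map fst) E); rewrite -!map_comp.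
have E2 : map snd s1 = map snd s2.
  rewrite -(unlift _ _ _ w1) -(unlift _ _ _ w2).
  by move: (congr1 (map (fv \o snd)) E); rewrite -!map_comp.
by rewrite -(zip_unzip s1) -(zip_unzip s2) /unzip1 /unzip2 E1 E2.
Qed.

Lemma card_preimage X : #|X| + (m \in X) <= #|fv @^-1: X|.
Proof.
have onto (Z : {set vertex H}) : X \subset fv @: Z -> #|X| <= #|Z|.
  by move/subset_leq_card/leq_trans; apply; apply: leq_imset_card.
case mX: (m \in X); last first.
  rewrite addn0; apply: onto; apply/subsetP => z; have [w <-] := fv_onto z => wX.
  by apply: imset_f; rewrite inE.
set x1 := (ends H e0).1; have x1X : x1 \in fv @^-1: X by rewrite inE.
rewrite (cardsD1 x1) x1X addn1 ltnS; apply: onto; apply/subsetP => z.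
have [w <-] := fv_onto z => wX.
case: (eqVneq w x1) => [->|ne]; last by apply: imset_f; rewrite !inE ne.
rewrite /x1 fv_e0; apply: imset_f; rewrite !inE -fv_e0 -/m mX andbT eq_sym.
exact: (noloop H e0).
Qed.

Lemma closed_preimage X : closed_set X -> closed_set (fv @^-1: X).
Proof.
move=> cX e x y j; rewrite !inE; have [ee0|] := eqVneq e e0.
  by rewrite ee0 in j; rewrite (fv_joins_e0 j).
case/eqP/fe_onto_but => e' ee'; rewrite -ee' in j.
exact: cX (same_ends_trans (ends_fe e') (same_ends_map fv j)).
Qed.

Section LiftRich.
Variables (X : {set vertex K}) (u v : vertex H).
Hypotheses (cX : closed_set X) (uX : fv u \in X).

Lemma lift_path p : is_path (fv u) (fv v) p ->
  walk u (lift u p v) v /\ size (lift u p v) <= size p + (m \in X).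
Proof.
case/is_pathE=> wp up; split; first exact: lift_walk wp erefl erefl.
apply: leq_trans (lift_size wp erefl erefl) _; rewrite leq_add2l count_uniq_mem //.
by case mp: (m \in _) => //=; rewrite (walk_sub cX uX wp mp).
Qed.

Lemma lift_short n w : walk (fv u) w (fv v) -> size w + c < n ->
  rich_pair (n + (m \in X)) c u v.
Proof.
move=> ww lw; have [p pp lp] := walk_shorten ww; have [wl sl] := lift_path pp.
by left; exists (lift u p v) => //; lia.
Qed.

Lemma rich_pair_lift n : rich_pair n c (fv u) (fv v) -> rich_pair (n + (m \in X)) c u v.
Proof.
case=> [[w ww lw]|[w1 [w2 [ne ww1 ww2 l1 l2]]]]; first exact: lift_short ww lw.
have [u1|/(walk_cut_loop ww1)[t wt lt]] := boolP (uniq (fv u :: map snd w1)); last first.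
  by apply: lift_short wt _; lia.
have [u2|/(walk_cut_loop ww2)[t wt lt]] := boolP (uniq (fv u :: map snd w2)); last first.
  by apply: lift_short wt _; lia.
have [wl1 sl1] := lift_path (proj2 (is_pathE _ _ _) (conj ww1 u1)).
have [wl2 sl2] := lift_path (proj2 (is_pathE _ _ _) (conj ww2 u2)).
right; exists (lift u w1 v), (lift u w2 v); split => //; try lia.
by move/(lift_inj ww1 ww2).
Qed.

End LiftRich.

Lemma contract_certificate : sp_certificate K c -> sp_certificate H c.
Proof.
case=> X [/set0Pn[x xX] cX rX]; exists (fv @^-1: X); split.
- by have [w wx] := fv_onto x; apply/set0Pn; exists w; rewrite inE wx.
- exact: closed_preimage.
move=> u v; rewrite !inE => uX vX.
exact: rich_pair_mono (card_preimage X) (rich_pair_lift cX uX (rX _ _ uX vX)).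
Qed.

End Contraction.

Lemma minor_step_certificate c (H K : graph) :
  minor_step H K -> sp_certificate K c -> sp_certificate H c.
Proof.
case.
- move=> [fv [fe [[g fvK gK] [[ge feK geK] hom]]]].
  apply: (@embed_onto_certificate _ _ g ge (can_inj gK) (can_inj geK)); last first.
    by move=> e; exists (fe e).
  move=> e; have := same_ends_map g (hom (ge e)); rewrite geK => /same_ends_sym.
  by case: (ends H (ge e)) => a b; rewrite /map_pair /= !fvK.
- move=> [_ [fv [fe [_ [fv_inj [_ [[fe' feK fe'K] hom]]]]]]].
  apply: (embed_onto_certificate fv_inj (can_inj feK) hom).
  by move=> e; exists (fe' e).
- move=> [e0 [fv [fe [[g fvK gK] [fe_inj [fe_onto hom]]]]]].
  apply: (embed_but_one_certificate (e0 := e0) (can_inj fvK) fe_inj hom).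
    by move=> e /eqP /fe_onto.
  by move=> y; exists (g y).
- move=> [e0 [fv [fe [_ [fv_onto [fv_e0 [fv_eq [fe_inj [fe_onto ends_fe]]]]]]]]].
  exact: (contract_certificate fv_onto fv_e0 fv_eq fe_inj fe_onto ends_fe).
Qed.

Lemma minor_certificate c (G H : graph) :
  minor_of G H -> sp_certificate G c -> sp_certificate H c.
Proof. by elim=> // H' K step _ IH /IH; apply: minor_step_certificate step. Qed.

Lemma floor_sp_ge (G : graph) c :
  (forall H, minor_of G H -> sp_certificate H c) -> c <= floor_sp G.
Proof.
move=> cert; rewrite /floor_sp; case: ex_minnP => k /pbP[H [mH <-]] _.
by have := certificate_usp (cert H mH); rewrite /sp; lia.
Qed.

Theorem theorem4p6 (G : graph) (d : nat) :
  is_diam G d ->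
  nv G - d - 1 <= floor_sp G /\ (usp G <= d -> nv G - d <= floor_sp G).
Proof.
move=> hd; split=> [|hu]; apply: floor_sp_ge => H /minor_certificate; apply.
  exact: diam_certificate.
exact: diam_usp_certificate.
Qed.
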